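(* Assume the setting of the previous statements: $C\subseteq\mathbb{R}^n$ nonempty closed convex; $F$ continuously differentiable; $x^*$ a solution of VIP$(F,C)$; a neighborhood $X$ of $x^*$ and constants $L_1,L_2,\mu>0$ with $\|F(x)-F(y)\|\le L_1\|x-y\|$, $\|\nabla F(x)-\nabla F(y)\|\le L_2\|x-y\|$ for $x,y\in X$ and $\langle\nabla F(x)d,d\rangle\ge\mu\|d\|^2$ for $x\in X$, $d\in\mathbb{R}^n$; sequences $\{x_k\}\subset C$ with $x_k\to x^*$, $B_k$, $\mu_k>0$, $\rho_k\ge0$, $\delta_k>0$, inexact solutions $z_k\in C$ and exact solutions $\hat z_k$ of VIP$(\varphi_k,C)$; constants $D,C_1,C_2>0$ such that for all sufficiently large $k$: $\|B_k-\nabla F(x_k)\|\le D$; $\mu_k=O(r_k)$, $\mu_k\le C_1\|x_k-x^*\|$, $\rho_k\to0$; $B_k+\mu_kI$ positive definite with $(1+\|B_k+\mu_kI\|)/c_k\le C_2$; $\|(B_k-\nabla F(x_k))(z_k-x_k)\|\le\delta_k\|z_k-x_k\|$, $\mu_k<\mu/2$, $\delta_k\le\mu/16$. Assume moreover that $F$ is strongly monotone on $C$ with modulus $\mu$ and that $0<\alpha<2\mu$, and let $\gamma\in(0,1)$. Then there exist a constant $\delta$ with $0<\delta<\mu/16$ and a neighborhood $X'$ of $x^*$ such that for all sufficiently large $k$ with $x_k\in X'$ and $\delta_k\le\delta$, one has $f_\alpha(z_k)\le\gamma f_\alpha(x_k)$.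
   Context: VIP$(F,C)$: find $x^*\in C$ with $\langle F(x^* ),x-x^*\rangle\ge0$ for all $x\in C$. $P_C$ is the Euclidean projection onto $C$. $r_k=\|x_k-P_C(x_k-F(x_k))\|$. $F$ is strongly monotone on $C$ with modulus $\mu$ if $\langle F(x)-F(y),x-y\rangle\ge\mu\|x-y\|^2$ for all $x,y\in C$. For $\alpha>0$ the merit function is $f_\alpha(x)=\max_{y\in C}\{-\langle F(x),y-x\rangle-\tfrac{\alpha}{2}\|y-x\|^2\}$. For each $k$, $\varphi_k(z)=F(x_k)+(B_k+\mu_kI)(z-x_k)$; $\hat z_k\in C$ is the unique solution of VIP$(\varphi_k,C)$: $\langle\varphi_k(\hat z_k),x-\hat z_k\rangle\ge0$ for all $x\in C$. With $e_k=z_k-P_C(z_k-\varphi_k(z_k))$, the inexact solutions $z_k\in C$ satisfy $\|e_k\|\le\rho_k\mu_k\|z_k-x_k\|$ and $\langle e_k,\varphi_k(z_k)+z_k-x_k\rangle\le\rho_k\mu_k\|z_k-x_k\|^2$. $c_k$ is the smallest eigenvalue of the symmetric part of $B_k+\mu_kI$. *)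

From HB Require Import structures.
From mathcomp Require Import all_boot all_order all_algebra.
From mathcomp Require Import boolp classical_sets reals.
Set Implicit Arguments. Unset Strict Implicit. Unset Printing Implicit Defensive.
Import Order.TTheory GRing.Theory Num.Theory.
Local Open Scope ring_scope.
Local Open Scope classical_set_scope.

Section Defs.
Variables (R : realType) (n : nat).
Notation vec := 'cV[R]_n.
Notation mat := 'M[R]_n.

Definition dotv (u v : vec) : R := \sum_(i < n) u i 0 * v i 0.
Definition enorm (u : vec) : R := Num.sqrt (dotv u u).

Definition opnorm (A : mat) : R :=
  sup [set enorm (A *m v) | v in [set v : vec | enorm v <= 1]].

Definition sympart (A : mat) : mat := 2^-1 *: (A + A^T).
Definition min_eig_sym (A : mat) : R :=
  inf [set a : R | eigenvalue (sympart A) a].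

Definition closed_set (C : set vec) : Prop :=
  forall x, (forall eps : R, 0 < eps -> exists2 y, C y & enorm (x - y) < eps) -> C x.
Definition convex_set (C : set vec) : Prop :=
  forall x y (t : R), C x -> C y -> 0 <= t <= 1 -> C (t *: x + (1 - t) *: y).

(* Euclidean projection onto C (nearest point; unique for nonempty closed convex C) *)
Definition projC (C : set vec) (x : vec) : vec :=
  xget 0 [set y | C y /\ forall z, C z -> enorm (x - y) <= enorm (x - z)].

Definition is_VIP_sol (F : vec -> vec) (C : set vec) (xs : vec) : Prop :=
  C xs /\ forall x, C x -> 0 <= dotv (F xs) (x - xs).

Definition strongly_monotone_on (F : vec -> vec) (C : set vec) (mu : R) : Prop :=
  forall x y, C x -> C y -> dotv (F x - F y) (x - y) >= mu * enorm (x - y) ^+ 2.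

Definition residual (F : vec -> vec) (C : set vec) (x : vec) : R :=
  enorm (x - projC C (x - F x)).

Definition merit (F : vec -> vec) (C : set vec) (alpha : R) (x : vec) : R :=
  sup [set - dotv (F x) (y - x) - alpha / 2 * enorm (y - x) ^+ 2 | y in C].

Definition linmap (F : vec -> vec) (xk : vec) (Bk : mat) (muk : R) (z : vec) : vec :=
  F xk + (Bk + muk%:M) *m (z - xk).

End Defs.

(* Write [e = |x_k - x*|] and [a = |z_k - x*|].  Testing the projection inequality that
   characterizes the inexact solution [z_k] against [x*] bounds <phi_k(z_k), z_k - x*>
   above by O(rho_k mu_k) terms.  Expanding phi_k(z_k) around [x*] (differentiability of
   F at x*, Lipschitz continuity and positive definiteness of the Jacobian, accuracy of
   B_k) bounds it below by <F x*, z_k - x*> + mu a^2 minus eta-small multiples of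
   [e a], [|z_k - x_k| a] and [|z_k - x_k|^2]; since x* solves VIP(F, C) this gives
   <F x*, z_k - x*> + mu/2 a^2 <= 3 eta e^2, in particular a <= e.  Finally
   f_alpha(z_k) <= <F x*, z_k - x*> + L1^2/(2 alpha) a^2 by Lipschitz continuity of F,
   while f_alpha(x_k) >= (mu - alpha/2) e^2 by strong monotonicity, so taking eta small
   relative to gamma yields the contraction. *)

From HB Require Import structures.
From mathcomp Require Import all_boot all_order all_algebra.
From mathcomp Require Import boolp classical_sets reals.
From mathcomp Require Import ring lra.
Set Implicit Arguments. Unset Strict Implicit. Unset Printing Implicit Defensive.
Import Order.TTheory GRing.Theory Num.Theory.
Local Open Scope ring_scope.
Local Open Scope classical_set_scope.

Section Euclidean.
Variables (R : realType) (n : nat).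
Implicit Types (u v w : 'cV[R]_n) (M : 'M[R]_n).

Lemma dotvC u v : dotv u v = dotv v u.
Proof. by apply: eq_bigr => i _; rewrite mulrC. Qed.

Lemma dotvDl u v w : dotv (u + v) w = dotv u w + dotv v w.
Proof. by rewrite /dotv -big_split; apply: eq_bigr => i _; rewrite mxE mulrDl. Qed.

Lemma dotvNl u w : dotv (- u) w = - dotv u w.
Proof. by rewrite /dotv -sumrN; apply: eq_bigr => i _; rewrite mxE mulNr. Qed.

Lemma dotvZl (a : R) u w : dotv (a *: u) w = a * dotv u w.
Proof. by rewrite /dotv mulr_sumr; apply: eq_bigr => i _; rewrite mxE mulrA. Qed.

Lemma dotvBl u v w : dotv (u - v) w = dotv u w - dotv v w.
Proof. by rewrite dotvDl dotvNl. Qed.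

Lemma dotvDr u v w : dotv w (u + v) = dotv w u + dotv w v.
Proof. by rewrite !(dotvC w) dotvDl. Qed.

Lemma dotvNr u w : dotv w (- u) = - dotv w u.
Proof. by rewrite !(dotvC w) dotvNl. Qed.

Lemma dotvBr u v w : dotv w (u - v) = dotv w u - dotv w v.
Proof. by rewrite dotvDr dotvNr. Qed.

Lemma dotvZr (a : R) u w : dotv w (a *: u) = a * dotv w u.
Proof. by rewrite !(dotvC w) dotvZl. Qed.

Lemma dotv0l w : dotv 0 w = 0.
Proof. by rewrite /dotv big1 // => i _; rewrite mxE mul0r. Qed.

Definition dotvE := (dotvDl, dotvDr, dotvBl, dotvBr, dotvNl, dotvNr, dotvZl, dotvZr).

Lemma sqr_coord_le_dotv u (i : 'I_n) : u i 0 ^+ 2 <= dotv u u.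
Proof.
rewrite /dotv (bigD1 i) //= -expr2 lerDl.
by apply: sumr_ge0 => k _; rewrite -expr2 sqr_ge0.
Qed.

Lemma dotv_ge0 u : 0 <= dotv u u.
Proof. by apply: sumr_ge0 => i _; rewrite -expr2 sqr_ge0. Qed.

Lemma dotv_eq0 u : dotv u u = 0 -> u = 0.
Proof.
move=> u0; apply/matrixP => i j; rewrite (ord1 j) mxE.
by apply/eqP; rewrite -sqrf_eq0 eq_le sqr_ge0 -u0 sqr_coord_le_dotv.
Qed.

Lemma enorm_ge0 u : 0 <= enorm u.
Proof. exact: sqrtr_ge0. Qed.

Lemma enorm_sqr u : enorm u ^+ 2 = dotv u u.
Proof. by rewrite sqr_sqrtr // dotv_ge0. Qed.

Lemma enorm_eq0 u : enorm u = 0 -> u = 0.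
Proof. by move=> u0; apply: dotv_eq0; rewrite -enorm_sqr u0 expr0n. Qed.

Lemma enorm0 : enorm (0 : 'cV[R]_n) = 0.
Proof. by rewrite /enorm dotv0l sqrtr0. Qed.

Lemma enormN u : enorm (- u) = enorm u.
Proof. by rewrite /enorm dotvNl dotvNr opprK. Qed.

Lemma enorm_distC u v : enorm (u - v) = enorm (v - u).
Proof. by rewrite -enormN opprB. Qed.

Lemma enormZ (a : R) u : enorm (a *: u) = `|a| * enorm u.
Proof.
by rewrite /enorm dotvZl dotvZr mulrA -expr2 sqrtrM ?sqr_ge0 // sqrtr_sqr.
Qed.

Lemma parallelogram u v :
  dotv (u - v) (u - v) + dotv (u + v) (u + v) = 2 * dotv u u + 2 * dotv v v.
Proof. by rewrite !dotvE (dotvC v u); ring. Qed.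

Lemma cauchy_schwarz u v : dotv u v <= enorm u * enorm v.
Proof.
have [->|u0] := eqVneq u 0; first by rewrite dotv0l enorm0 mul0r.
have up : 0 < enorm u by rewrite lt_def enorm_ge0 andbT; apply: contra_neq u0; apply: enorm_eq0.
have := dotv_ge0 (dotv u u *: v - dotv u v *: u).
rewrite !dotvE (dotvC v u) -[dotv u u]enorm_sqr -[dotv v v]enorm_sqr.
set a := enorm u; set b := enorm v; set d := dotv u v => h.
have : d ^+ 2 <= (a * b) ^+ 2.
  rewrite -(ler_pM2l (exprn_gt0 2 up)) -/a; nra.
move=> d2; apply: le_trans (ler_norm d) _.
by rewrite -ler_sqr ?nnegrE ?mulr_ge0 ?enorm_ge0 // real_normK ?num_real.
Qed.

Lemma cauchy_schwarzN u v : - dotv u v <= enorm u * enorm v.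
Proof. by rewrite -dotvNl -(enormN u) cauchy_schwarz. Qed.

Lemma ler_enormD u v : enorm (u + v) <= enorm u + enorm v.
Proof.
rewrite -ler_sqr ?nnegrE ?addr_ge0 ?enorm_ge0 // enorm_sqr dotvDl !dotvDr.
rewrite (dotvC v u) -!enorm_sqr; have := cauchy_schwarz u v; lra.
Qed.

Lemma abs_coord_le_enorm u (i : 'I_n) : `|u i 0| <= enorm u.
Proof.
by rewrite -ler_sqr ?nnegrE ?enorm_ge0 // real_normK ?num_real // enorm_sqr sqr_coord_le_dotv.
Qed.

Lemma enorm_mulmx_bounded M :
  exists2 K : R, 0 <= K & forall v, enorm (M *m v) <= K * enorm v.
Proof.
pose row_of i : 'cV[R]_n := \col_j M i j.
exists (Num.sqrt (\sum_i dotv (row_of i) (row_of i))) => [|v]; first exact: sqrtr_ge0.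
rewrite -ler_sqr ?nnegrE ?mulr_ge0 ?sqrtr_ge0 ?enorm_ge0 //.
rewrite exprMn !enorm_sqr sqr_sqrtr ?sumr_ge0 // => [|i _]; last exact: dotv_ge0.
rewrite /dotv mulr_suml; apply: ler_sum => i _.
have -> : (M *m v) i 0 = dotv (row_of i) v.
  by rewrite mxE; apply: eq_bigr => j _; rewrite mxE.
rewrite -[_ * _]expr2 -[\sum_(j < n) _ * _]/(dotv (row_of i) (row_of i)).
rewrite -[\sum_(j < n) v j 0 * _]/(dotv v v) -!enorm_sqr -exprMn.
rewrite -real_normK ?num_real // ler_sqr ?nnegrE ?mulr_ge0 ?enorm_ge0 //.
by rewrite ler_norml cauchy_schwarz lerNl cauchy_schwarzN.
Qed.

Lemma enorm_mulmx_le M v : enorm (M *m v) <= opnorm M * enorm v.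
Proof.
have [K K0 MK] := enorm_mulmx_bounded M.
set S := [set enorm (M *m w) | w in [set w : 'cV[R]_n | enorm w <= 1]].
have supS : has_sup S.
  split; first by exists (enorm (M *m 0)), 0 => //=; rewrite enorm0 ler01.
  exists K => _ [w /= w1 <-]; apply: le_trans (MK w) _.
  by rewrite -[leRHS]mulr1 ler_wpM2l.
have [->|v0] := eqVneq v 0; first by rewrite mulmx0 enorm0 mulr0.
have vp : 0 < enorm v by rewrite lt_def enorm_ge0 andbT; apply: contra_neq v0; apply: enorm_eq0.
have : enorm (M *m ((enorm v)^-1 *: v)) <= opnorm M.
  apply: (sup_upper_bound supS); exists ((enorm v)^-1 *: v) => //=.
  by rewrite enormZ ger0_norm ?invr_ge0 ?enorm_ge0 // mulVf ?gt_eqF.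
rewrite -scalemxAr enormZ ger0_norm ?invr_ge0 ?enorm_ge0 //.
by rewrite -ler_pdivrMr // mulrC.
Qed.

End Euclidean.

Lemma real_cauchy_limit (R : realType) (u b : nat -> R) :
  (forall m l, u m - u l <= b m + b l) -> exists L, forall m, `|u m - L| <= b m.
Proof.
move=> ub; set E := [set u m - b m | m in [set: nat]].
have E0 : E (u 0%N - b 0%N) by exists 0%N.
have supE : has_sup E.
  by split; [exists (u 0%N - b 0%N) | exists (u 0%N + b 0%N) => _ [m _ <-]; have := ub m 0%N; lra].
exists (sup E) => m.
have lo : u m - b m <= sup E by apply: sup_upper_bound; last by exists m.
have hi : sup E <= u m + b m.
  by apply: ge_sup; [exists (u 0%N - b 0%N) | move=> _ [l _ <-]; have := ub l m; lra].
by rewrite ler_norml; apply/andP; split; lra.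
Qed.

Lemma vec_cauchy_limit (R : realType) (n : nat) (u : nat -> 'cV[R]_n) (b : nat -> R) :
  (forall m l, enorm (u m - u l) <= b m + b l) ->
  exists L, forall m, enorm (u m - L) <= n%:R * b m.
Proof.
move=> ub.
have coord_limit i : exists Li, forall m, `|u m i 0 - Li| <= b m.
  apply: real_cauchy_limit => m l; apply: le_trans (ub m l).
  apply: le_trans (ler_norm _) _; have := abs_coord_le_enorm (u m - u l) i; by rewrite !mxE.
have [Lf hL] := choice coord_limit.
exists (\col_i Lf i) => m.
have bm0 : 0 <= b m by have := ub m m; rewrite subrr enorm0; lra.
rewrite -ler_sqr ?nnegrE ?mulr_ge0 ?enorm_ge0 // enorm_sqr.
apply: (@le_trans _ _ (n%:R * b m ^+ 2)).
  rewrite mulr_natl -[X in _ *+ X]card_ord -sumr_const; apply: ler_sum => i _.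
  rewrite !mxE -expr2 -real_normK ?num_real // ler_sqr ?nnegrE //; exact: hL.
rewrite exprMn ler_wpM2r ?sqr_ge0 // -natrX ler_nat.
by case: (posnP n) => [->|n0] //; rewrite expnS leq_pmulr // expn_gt0 n0.
Qed.

Section Projection.
Variables (R : realType) (n : nat) (C : set 'cV[R]_n).
Hypotheses (C_nonempty : exists c, C c) (C_closed : closed_set C) (C_convex : convex_set C).
Implicit Types (y c : 'cV[R]_n).

Lemma near_minimizers_close y (d2 e e' : R) c c' :
  (forall w, C w -> d2 <= dotv (y - w) (y - w)) -> C c -> C c' ->
  dotv (y - c) (y - c) <= d2 + e -> dotv (y - c') (y - c') <= d2 + e' ->
  dotv (c - c') (c - c') <= 2 * e + 2 * e'.
Proof.
move=> d2_le Cc Cc' c_near c'_near.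
have Cmid : C (2^-1 *: c + (1 - 2^-1) *: c').
  by apply: C_convex => //; rewrite invr_ge0 ler0n /= invf_le1 // ler1n.
have := parallelogram (y - c') (y - c); have := d2_le _ Cmid.
have -> : y - c' - (y - c) = c - c' by rewrite opprB addrC addrA subrK.
have -> : y - c' + (y - c) = 2 *: (y - (2^-1 *: c + (1 - 2^-1) *: c')).
  by apply/matrixP => i j; rewrite !mxE; field.
rewrite dotvZl dotvZr; lra.
Qed.

Lemma nearest_point_exists y :
  exists p, C p /\ forall c, C c -> enorm (y - p) <= enorm (y - c).
Proof.
have [c0 Cc0] := C_nonempty.
set E := [set dotv (y - c) (y - c) | c in C].
have infE : has_inf E.
  by split; [exists (dotv (y - c0) (y - c0)), c0 | exists 0 => _ [c _ <-]; apply: dotv_ge0].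
have d2_le c : C c -> inf E <= dotv (y - c) (y - c).
  by move=> Cc; apply: (ge_inf infE.2); exists c.
pose t m : R := m.+1%:R^-1.
have t_gt0 m : 0 < t m by rewrite invr_gt0.
have t_small e : 0 < e -> exists m, t m < e.
  by move=> e0; have [m] := ltr_add_invr e0; rewrite add0r; exists m.
have near_inf m : exists c, C c /\ dotv (y - c) (y - c) < inf E + t m ^+ 2.
  by have [_ [c Cc <-]] := inf_adherent (exprn_gt0 2 (t_gt0 m)) infE; exists c.
have [cs cs_near] := choice near_inf.
have [L csL] : exists L, forall m, enorm (cs m - L) <= n%:R * (2 * t m).
  apply: vec_cauchy_limit => m l; rewrite -ler_sqr ?nnegrE ?enorm_ge0 //; last first.
    by rewrite addr_ge0 // mulr_ge0 // ltW.
  rewrite enorm_sqr; apply: le_trans (near_minimizers_close d2_le (cs_near m).1 (cs_near l).1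
    (ltW (cs_near m).2) (ltW (cs_near l).2)) _.
  by have := t_gt0 m; have := t_gt0 l; nra.
have cs_dist m c : C c -> enorm (y - cs m) <= enorm (y - c) + t m.
  move=> Cc; rewrite -ler_sqr ?nnegrE ?addr_ge0 ?enorm_ge0 ?(ltW (t_gt0 m)) // !enorm_sqr.
  have := (cs_near m).2; have := d2_le _ Cc; rewrite -enorm_sqr.
  by have := t_gt0 m; have := enorm_ge0 (y - c); nra.
have L_dist m c : C c -> enorm (y - L) <= enorm (y - c) + (2 * n%:R + 1) * t m.
  move=> Cc; have -> : y - L = (y - cs m) + (cs m - L) by rewrite addrA subrK.
  by apply: le_trans (ler_enormD _ _) _; have := cs_dist m c Cc; have := csL m; lra.
have n0 : (0 : R) < 2 * n%:R + 1 by have := ler0n R n; lra.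
exists L; split => [|c Cc].
  apply: C_closed => e e0; have [m tm] := t_small _ (divr_gt0 e0 n0).
  exists (cs m); first exact: (cs_near m).1.
  rewrite ltr_pdivlMr // in tm; have := csL m; rewrite enorm_distC.
  by have := t_gt0 m; nra.
apply/ler_addgt0Pr => e e0; have [m tm] := t_small _ (divr_gt0 e0 n0).
by have := L_dist m c Cc; rewrite ltr_pdivlMr // in tm; lra.
Qed.

Lemma projC_nearest y :
  C (projC C y) /\ forall c, C c -> enorm (y - projC C y) <= enorm (y - c).
Proof.
have [p p_nearest] := nearest_point_exists y.
exact: (@xgetI _ 0 [set q | C q /\ forall c, C c -> enorm (y - q) <= enorm (y - c)] p).
Qed.

(* Were the inner product positive, a small step from [projC C y] towards [c] would
   come closer to [y]. *)
Lemma projC_vi y c : C c -> dotv (y - projC C y) (c - projC C y) <= 0.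
Proof.
move=> Cc; have [Cp p_nearest] := projC_nearest y; set p := projC C y in Cp p_nearest *.
set a := dotv (y - p) (c - p); set Q := dotv (c - p) (c - p).
rewrite leNgt; apply/negP => a_gt0.
have Q0 : 0 <= Q by apply: dotv_ge0.
pose t := a / (a + Q).
have aQ : 0 < a + Q by lra.
have t_gt0 : 0 < t by rewrite divr_gt0.
have tE : t * (a + Q) = a by rewrite /t mulfVK // gt_eqF.
have t_le1 : t <= 1 by rewrite ler_pdivrMr // mul1r; lra.
have Cpt : C (t *: c + (1 - t) *: p) by apply: C_convex => //; rewrite (ltW t_gt0).
have := p_nearest _ Cpt; rewrite -ler_sqr ?nnegrE ?enorm_ge0 // !enorm_sqr.
have -> : y - (t *: c + (1 - t) *: p) = (y - p) - t *: (c - p).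
  by apply/matrixP => i j; rewrite !mxE; ring.
rewrite /a /Q in tE a_gt0 Q0 *; move: (y - p) (c - p) tE a_gt0 Q0 => u q.
rewrite !dotvE (dotvC q u) => tE a_gt0 Q0.
have : t * (t * (dotv u q + dotv q q)) = t * dotv u q by rewrite tE.
nra.
Qed.

End Projection.

Section Merit.
Variables (R : realType) (n : nat) (C : set 'cV[R]_n) (F : 'cV[R]_n -> 'cV[R]_n).
Variables (alpha : R) (xs : 'cV[R]_n).
Hypotheses (alpha_gt0 : 0 < alpha) (xs_sol : is_VIP_sol F C xs).
Implicit Types (x y : 'cV[R]_n).

Let merit_term x y := - dotv (F x) (y - x) - alpha / 2 * enorm (y - x) ^+ 2.

Lemma merit_ub x (U : R) : (forall y, C y -> merit_term x y <= U) -> merit F C alpha x <= U.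
Proof.
move=> U_ub; apply: ge_sup => [|_ [y Cy <-]]; last exact: U_ub.
by exists (merit_term x xs), xs; first exact: xs_sol.1.
Qed.

Lemma merit_lb x y : C y -> merit_term x y <= merit F C alpha x.
Proof.
move=> Cy; apply: sup_upper_bound; last by exists y.
split; first by exists (merit_term x y), y.
exists (enorm (F x) ^+ 2 / (2 * alpha)) => _ [c Cc <-].
rewrite /merit_term ler_pdivlMr ?mulr_gt0 //.
have := cauchy_schwarzN (F x) (c - x).
set d := dotv _ _; set a := enorm (F x); set b := enorm (c - x) => csN.
have -> : (- d - alpha / 2 * b ^+ 2) * (2 * alpha) = 2 * alpha * (- d) - (alpha * b) ^+ 2.
  by field.
have := sqr_ge0 (a - alpha * b); have := ler_wpM2l (ltW alpha_gt0) csN; nra.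
Qed.

Lemma merit_ge_dist x (mu : R) :
  strongly_monotone_on F C mu -> C x ->
  (mu - alpha / 2) * enorm (x - xs) ^+ 2 <= merit F C alpha x.
Proof.
move=> smon Cx; apply: le_trans (merit_lb x xs_sol.1).
have := smon x xs Cx xs_sol.1; have := xs_sol.2 x Cx; rewrite /merit_term enorm_distC.
have -> : - dotv (F x) (xs - x) = dotv (F x - F xs) (x - xs) + dotv (F xs) (x - xs).
  by rewrite !dotvE; ring.
lra.
Qed.

Lemma merit_le_dist z (L1 : R) :
  enorm (F z - F xs) <= L1 * enorm (z - xs) ->
  merit F C alpha z <= dotv (F xs) (z - xs) + L1 ^+ 2 / (2 * alpha) * enorm (z - xs) ^+ 2.
Proof.
move=> FL; apply: merit_ub => y Cy.
have -> : merit_term z y = - dotv (F z - F xs) (y - z) - dotv (F xs) (y - xs)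
    + dotv (F xs) (z - xs) - alpha / 2 * enorm (y - z) ^+ 2.
  by rewrite /merit_term !dotvE; ring.
have := xs_sol.2 y Cy; have := cauchy_schwarzN (F z - F xs) (y - z).
set a := enorm (z - xs); set b := enorm (y - z); set g := dotv (F xs) (z - xs).
have a0 : 0 <= a := enorm_ge0 _; have b0 : 0 <= b := enorm_ge0 _.
have Fab : enorm (F z - F xs) * b <= L1 * a * b by rewrite ler_wpM2r.
have amgm : L1 * a * b - alpha / 2 * b ^+ 2 <= L1 ^+ 2 / (2 * alpha) * a ^+ 2.
  rewrite -subr_ge0; have -> : L1 ^+ 2 / (2 * alpha) * a ^+ 2 - (L1 * a * b - alpha / 2 * b ^+ 2)
      = (L1 * a - alpha * b) ^+ 2 / (2 * alpha) by field; rewrite gt_eqF.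
  by rewrite divr_ge0 ?sqr_ge0 // mulr_ge0 // ltW.
lra.
Qed.

End Merit.

Lemma inexact_solution_dotv (R : realType) (n : nat) (C : set 'cV[R]_n)
    (x z w Phi : 'cV[R]_n) (c : R) :
  (exists c, C c) -> closed_set C -> convex_set C -> C w ->
  enorm (z - projC C (z - Phi)) <= c * enorm (z - x) ->
  dotv (z - projC C (z - Phi)) (Phi + z - x) <= c * enorm (z - x) ^+ 2 ->
  dotv Phi (z - w) <= c * enorm (z - x) * enorm (z - w) + 2 * c * enorm (z - x) ^+ 2.
Proof.
move=> C_ne C_cl C_cv Cw e_le e_dot.
have := projC_vi C_ne C_cl C_cv (z - Phi) Cw.
set e := z - projC C (z - Phi) in e_le e_dot *.
have -> : z - Phi - projC C (z - Phi) = e - Phi by rewrite /e addrAC.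
have -> : w - projC C (z - Phi) = e - (z - w).
  by rewrite /e; apply/matrixP => i j; rewrite !mxE; ring.
rewrite -addrA in e_dot; move: e_le e_dot; clearbody e.
move: (z - w) (z - x) => u v e_le e_dot vi.
rewrite !dotvE (dotvC Phi e) in e_dot vi.
have := cauchy_schwarz e u; have := cauchy_schwarzN e v.
have := ler_wpM2r (enorm_ge0 u) e_le; have := ler_wpM2r (enorm_ge0 v) e_le.
have := dotv_ge0 e; rewrite expr2; lra.
Qed.

Lemma linmap_dotv_lb (R : realType) (n : nat) (F : 'cV[R]_n -> 'cV[R]_n)
    (xs x z : 'cV[R]_n) (Js Jx B : 'M[R]_n) (mk mu eta L2 dk : R) :
  0 <= mk ->
  enorm (F x - F xs - Js *m (x - xs)) <= eta * enorm (x - xs) ->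
  mu * enorm (z - xs) ^+ 2 <= dotv (Js *m (z - xs)) (z - xs) ->
  opnorm (Jx - Js) <= L2 * enorm (x - xs) ->
  enorm ((B - Jx) *m (z - x)) <= dk * enorm (z - x) ->
  dotv (F xs) (z - xs) + mu * enorm (z - xs) ^+ 2
    - (eta * enorm (x - xs) + (L2 * enorm (x - xs) + dk + mk) * enorm (z - x))
      * enorm (z - xs)
  <= dotv (linmap F x B mk z) (z - xs).
Proof.
move=> mk0 Fx_lin J_mon J_lip BJ.
set a := enorm (z - xs); set s := enorm (z - x); set e0 := enorm (x - xs).
have a0 : 0 <= a := enorm_ge0 _; have s0 : 0 <= s := enorm_ge0 _.
have -> : linmap F x B mk z = (F x - F xs - Js *m (x - xs)) + Js *m (z - xs)
    + (Jx - Js) *m (z - x) + (B - Jx) *m (z - x) + mk *: (z - x) + F xs.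
  rewrite /linmap !(mulmxBr, mulmxBl, mulmxDl, mulmxDr) !mul_scalar_mx.
  by apply/matrixP => i j; rewrite !mxE; ring.
move: Fx_lin; set r1 := F x - F xs - Js *m (x - xs) => Fx_lin; clearbody r1.
rewrite !dotvDl dotvZl.
have b1 := cauchy_schwarzN r1 (z - xs).
have b2 := cauchy_schwarzN ((Jx - Js) *m (z - x)) (z - xs).
have b3 := cauchy_schwarzN ((B - Jx) *m (z - x)) (z - xs).
have b4 := ler_wpM2l mk0 (cauchy_schwarzN (z - x) (z - xs)).
have e1 := ler_wpM2r a0 Fx_lin.
have e2 := ler_wpM2r a0 (le_trans (enorm_mulmx_le _ _) (ler_wpM2r s0 J_lip)).
have e3 := ler_wpM2r a0 BJ.
rewrite -/a -/s -/e0 mulrN in J_mon b1 b2 b3 b4 e1 e2 e3 *.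
have -> : (eta * e0 + (L2 * e0 + dk + mk) * s) * a
    = eta * e0 * a + L2 * e0 * s * a + dk * s * a + mk * (s * a) by ring.
lra.
Qed.

Lemma quadratic_error_bound (R : realType) (g mu eta e0 a s : R) :
  0 <= e0 -> 0 <= a -> 0 <= s -> 0 <= g -> 0 < eta -> eta <= mu / 8 ->
  s <= a + e0 -> g + mu * a ^+ 2 <= eta * e0 * a + eta * s * a + eta * s ^+ 2 ->
  g + mu / 2 * a ^+ 2 <= 3 * eta * e0 ^+ 2 /\ a <= e0.
Proof.
move=> e00 a0 s0 g0 eta0 eta_le s_le est.
have sa : eta * s * a <= eta * (a + e0) * a by apply/ler_wpM2r/ler_wpM2l => //; apply: ltW.
have ss : eta * s ^+ 2 <= eta * (a + e0) ^+ 2.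
  by apply: ler_wpM2l; [apply: ltW | rewrite ler_sqr ?nnegrE // addr_ge0].
have ea : 2 * e0 * a <= a ^+ 2 + e0 ^+ 2 by have := sqr_ge0 (a - e0); lra.
have eta_ea := ler_wpM2l (ltW eta0) ea.
have eta_a : 4 * eta * a ^+ 2 <= mu / 2 * a ^+ 2 by rewrite ler_wpM2r ?sqr_ge0 //; lra.
have quad : g + mu / 2 * a ^+ 2 <= 3 * eta * e0 ^+ 2 by lra.
split=> //; rewrite -ler_sqr ?nnegrE //.
have mu0 : 0 < mu by lra.
rewrite -(ler_pM2l (_ : 0 < mu / 2)) ?divr_gt0 //.
have := ler_wpM2r (sqr_ge0 e0) eta_le; nra.
Qed.

Lemma contraction_of_bounds (R : realType) (mz mx g K a eta P gamma mu e0 : R) :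
  0 <= K -> 0 < mu -> 0 <= gamma -> 0 <= P -> 0 <= g ->
  mz <= g + K * a ^+ 2 -> g + mu / 2 * a ^+ 2 <= 3 * eta * e0 ^+ 2 ->
  8 * eta * (mu + 2 * K) <= gamma * P * mu -> P * e0 ^+ 2 <= mx ->
  mz <= gamma * mx.
Proof.
move=> K0 mu0 gamma0 P0 g0 mz_le err rate mx_ge.
rewrite -(ler_pM2l mu0).
have a2 : mu * a ^+ 2 <= 6 * eta * e0 ^+ 2 by lra.
have Ka2 := ler_wpM2l K0 a2.
have gmz : mu * mz <= mu * g + K * (mu * a ^+ 2).
  by rewrite mulrCA -mulrDr ler_wpM2l // ltW.
have rate_e0 := ler_wpM2r (sqr_ge0 e0) rate.
have gamma_mx := ler_wpM2l gamma0 (ler_wpM2l (ltW mu0) mx_ge).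
have := mulr_ge0 (mulr_ge0 (mulr_ge0 gamma0 P0) (ltW mu0)) (sqr_ge0 e0).
have g_le : g <= 3 * eta * e0 ^+ 2 by have := mulr_ge0 (ltW mu0) (sqr_ge0 a); lra.
have := ler_wpM2l (ltW mu0) g_le; lra.
Qed.

Section LocalContraction.
Variables (R : realType) (n : nat) (C : set 'cV[R]_n).
Variables (F : 'cV[R]_n -> 'cV[R]_n) (JF : 'cV[R]_n -> 'M[R]_n) (xs : 'cV[R]_n).
Variables (mu alpha L1 L2 eta r : R).
Variables (x z : 'cV[R]_n) (B : 'M[R]_n) (mk rho dk : R).
Hypotheses (C_nonempty : exists c, C c) (C_closed : closed_set C) (C_convex : convex_set C).
Hypotheses (xs_sol : is_VIP_sol F C xs) (F_smon : strongly_monotone_on F C mu).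
Hypotheses (alpha_gt0 : 0 < alpha) (alpha_lt : alpha < 2 * mu).
Hypotheses (eta_gt0 : 0 < eta) (eta_le : eta <= mu / 8).
Hypothesis F_lip : forall y, enorm (y - xs) < r -> enorm (F y - F xs) <= L1 * enorm (y - xs).
Hypothesis JF_lip :
  forall y, enorm (y - xs) < r -> opnorm (JF y - JF xs) <= L2 * enorm (y - xs).
Hypothesis JF_mon : forall d, mu * enorm d ^+ 2 <= dotv (JF xs *m d) d.
Hypothesis F_diff : forall y, enorm (y - xs) < r ->
  enorm (F y - F xs - JF xs *m (y - xs)) <= eta * enorm (y - xs).

Hypotheses (Cx : C x) (Cz : C z) (x_near : enorm (x - xs) < r).
Hypothesis inexact_res : enorm (z - projC C (z - linmap F x B mk z))
  <= rho * mk * enorm (z - x).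
Hypothesis inexact_dot : dotv (z - projC C (z - linmap F x B mk z))
  (linmap F x B mk z + z - x) <= rho * mk * enorm (z - x) ^+ 2.
Hypothesis B_err : enorm ((B - JF x) *m (z - x)) <= dk * enorm (z - x).
Hypotheses (rho_ge0 : 0 <= rho) (rho_le1 : rho <= 1) (mk_ge0 : 0 <= mk).
Hypotheses (mk_small : mk <= eta / 4) (dk_small : dk <= eta / 4).
Hypothesis L2_small : L2 * enorm (x - xs) <= eta / 4.

Lemma inexact_step_error :
  dotv (F xs) (z - xs) + mu / 2 * enorm (z - xs) ^+ 2 <= 3 * eta * enorm (x - xs) ^+ 2
  /\ enorm (z - xs) <= enorm (x - xs).
Proof.
set a := enorm (z - xs); set s := enorm (z - x); set e0 := enorm (x - xs).
have e00 : 0 <= e0 := enorm_ge0 _; have a0 : 0 <= a := enorm_ge0 _.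
have s0 : 0 <= s := enorm_ge0 _.
have rmk0 : 0 <= rho * mk := mulr_ge0 rho_ge0 mk_ge0.
have rmk_le : rho * mk <= mk by rewrite -[leRHS]mul1r ler_wpM2r.
have upper := inexact_solution_dotv C_nonempty C_closed C_convex xs_sol.1 inexact_res inexact_dot.
have lower := linmap_dotv_lb mk_ge0 (F_diff x_near) (JF_mon (z - xs)) (JF_lip x_near) B_err.
have s_le : s <= a + e0.
  rewrite /s; have -> : z - x = (z - xs) + (xs - x) by rewrite addrA subrK.
  by rewrite /e0 (enorm_distC x); apply: ler_enormD.
apply: (quadratic_error_bound (s := s)) => //; first exact: xs_sol.2.
rewrite -/a -/s -/e0 in upper lower.
have := L2_small; rewrite -/e0 => L2e0.
have coef : L2 * e0 + dk + mk + rho * mk <= eta by have := mk_small; have := dk_small; lra.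
have rmk2 : 2 * (rho * mk) <= eta by have := mk_small; lra.
have := ler_wpM2r (mulr_ge0 s0 a0) coef; have := ler_wpM2r (sqr_ge0 s) rmk2.
lra.
Qed.

Lemma inexact_step_contraction (gamma : R) : 0 <= gamma ->
  8 * eta * (mu + 2 * (L1 ^+ 2 / (2 * alpha))) <= gamma * (mu - alpha / 2) * mu ->
  merit F C alpha z <= gamma * merit F C alpha x.
Proof.
move=> gamma0 rate; have [err z_near] := inexact_step_error.
have mu0 : 0 < mu by have := eta_le; have := eta_gt0; lra.
apply: (contraction_of_bounds _ mu0 gamma0 _ (xs_sol.2 z Cz) _ err rate).
- by rewrite divr_ge0 ?sqr_ge0 // mulr_ge0 // ltW.
- by have := alpha_lt; have := alpha_gt0; lra.
- exact/merit_le_dist/F_lip/(le_lt_trans z_near x_near).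
- exact: merit_ge_dist.
Qed.

End LocalContraction.

Lemma contraction_rate_exists (R : realType) (mu alpha K gamma : R) :
  0 < alpha -> alpha < 2 * mu -> 0 <= K -> 0 < gamma -> gamma < 1 ->
  exists2 eta, 0 < eta <= mu / 8 & 8 * eta * (mu + 2 * K) <= gamma * (mu - alpha / 2) * mu.
Proof.
move=> alpha0 alpha_lt K0 gamma0 gamma1.
have mu0 : 0 < mu by lra.
have muK : 0 < 8 * (mu + 2 * K) by lra.
have P0 : 0 < mu - alpha / 2 by lra.
set q := gamma * (mu - alpha / 2) * mu.
exists (q / (8 * (mu + 2 * K))); last first.
  by rewrite (_ : 8 * _ * _ = q) //; field; rewrite gt_eqF //; lra.
apply/andP; split; first by rewrite divr_gt0 // !mulr_gt0.
rewrite ler_pdivrMr // (_ : mu / 8 * _ = (mu + 2 * K) * mu); last by field.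
rewrite /q ler_pM2r //; have := mulr_ge0 (ltW gamma0) (ltW P0); nra.
Qed.

Unset Implicit Arguments.

Theorem mainTheorem6 (R : realType) (n : nat) (C : set 'cV[R]_n)
  (F : 'cV[R]_n -> 'cV[R]_n) (JF : 'cV[R]_n -> 'M[R]_n) (xs : 'cV[R]_n)
  (X : set 'cV[R]_n) (L1 L2 mu : R)
  (x : nat -> 'cV[R]_n) (B : nat -> 'M[R]_n) (muk rho dlt : nat -> R)
  (z zh : nat -> 'cV[R]_n) (D C1 C2 alpha gamma : R) :
  (exists c, C c) -> closed_set C -> convex_set C ->
  (forall y, forall eps : R, 0 < eps -> exists2 d : R, 0 < d &
     forall w, enorm (w - y) < d ->
       enorm (F w - F y - JF y *m (w - y)) <= eps * enorm (w - y)) ->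
  (forall y, forall eps : R, 0 < eps -> exists2 d : R, 0 < d &
     forall w, enorm (w - y) < d -> opnorm (JF w - JF y) < eps) ->
  is_VIP_sol F C xs ->
  (exists2 r : R, 0 < r & forall y, enorm (y - xs) < r -> X y) ->
  0 < L1 -> 0 < L2 -> 0 < mu ->
  (forall y w, X y -> X w -> enorm (F y - F w) <= L1 * enorm (y - w)) ->
  (forall y w, X y -> X w -> opnorm (JF y - JF w) <= L2 * enorm (y - w)) ->
  (forall y d, X y -> dotv (JF y *m d) d >= mu * enorm d ^+ 2) ->
  (forall k, C (x k)) ->
  (forall eps : R, 0 < eps -> exists N, forall k, (N <= k)%N -> enorm (x k - xs) < eps) ->
  (forall k, 0 < muk k) -> (forall k, 0 <= rho k) -> (forall k, 0 < dlt k) ->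
  (forall k, C (z k)) ->
  (forall k, enorm (z k - projC C (z k - linmap F (x k) (B k) (muk k) (z k)))
             <= rho k * muk k * enorm (z k - x k)) ->
  (forall k, dotv (z k - projC C (z k - linmap F (x k) (B k) (muk k) (z k)))
                  (linmap F (x k) (B k) (muk k) (z k) + z k - x k)
             <= rho k * muk k * enorm (z k - x k) ^+ 2) ->
  (forall k, is_VIP_sol (linmap F (x k) (B k) (muk k)) C (zh k)) ->
  0 < D -> 0 < C1 -> 0 < C2 ->
  (exists M : R, exists N, forall k, (N <= k)%N -> muk k <= M * residual F C (x k)) ->
  (forall eps : R, 0 < eps -> exists N, forall k, (N <= k)%N -> rho k < eps) ->
  (exists N, forall k, (N <= k)%N ->
     opnorm (B k - JF (x k)) <= D /\
     muk k <= C1 * enorm (x k - xs) /\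
     (forall d : 'cV[R]_n, d != 0 -> 0 < dotv ((B k + (muk k)%:M) *m d) d) /\
     (1 + opnorm (B k + (muk k)%:M)) / min_eig_sym (B k + (muk k)%:M) <= C2 /\
     enorm ((B k - JF (x k)) *m (z k - x k)) <= dlt k * enorm (z k - x k) /\
     muk k < mu / 2 /\
     dlt k <= mu / 16) ->
  strongly_monotone_on F C mu ->
  0 < alpha -> alpha < 2 * mu ->
  0 < gamma -> gamma < 1 ->
  exists2 delta : R, 0 < delta < mu / 16 &
    exists2 eps : R, 0 < eps &
      exists N, forall k, (N <= k)%N -> enorm (x k - xs) < eps -> dlt k <= delta ->
        merit F C alpha (z k) <= gamma * merit F C alpha (x k).
Proof.
move=> C_ne C_cl C_cv F_diff _ xs_sol [r r_gt0 ballX] _ L2_gt0 _ F_lip JF_lip JF_mon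
  Cx _ muk_gt0 rho_ge0 _ Cz inexact_res inexact_dot _ _ C1_gt0 _ _ rho_cvg [N0 bounds]
  F_smon alpha_gt0 alpha_lt gamma_gt0 gamma_lt1.
have K0 : 0 <= L1 ^+ 2 / (2 * alpha) by rewrite divr_ge0 ?sqr_ge0 // mulr_ge0 // ltW.
have [eta /andP[eta_gt0 eta_le] rate] :=
  contraction_rate_exists alpha_gt0 alpha_lt K0 gamma_gt0 gamma_lt1.
have [d d_gt0 F_diff_xs] := F_diff xs eta eta_gt0.
have [N1 rho_lt1] := rho_cvg 1 ltr01.
exists (eta / 4); first by apply/andP; split; lra.
have LC : 0 < 4 * (L2 + C1) by lra.
pose eps := Order.min (Order.min r d) (eta / (4 * (L2 + C1))).
exists eps; first by rewrite !lt_min r_gt0 d_gt0 divr_gt0.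
exists (maxn N0 N1) => k /[!geq_max] /andP[/bounds[_ [muk_le [_ [_ [B_err _]]]]] /rho_lt1 rho_lt]
  x_near dk_le.
have := x_near; rewrite !lt_min ltr_pdivlMr // => /andP[/andP[x_r x_d] x_eta].
have e0_ge0 := enorm_ge0 (x k - xs).
have X_xs : X xs by apply: ballX; rewrite subrr enorm0.
apply: (inexact_step_contraction (JF := JF) (L1 := L1) (L2 := L2) (r := Order.min r d)
  (dk := dlt k) C_ne C_cl C_cv xs_sol F_smon alpha_gt0 alpha_lt eta_gt0 eta_le) => //.
- by move=> y; rewrite lt_min => /andP[/ballX Xy _]; apply: F_lip.
- by move=> y; rewrite lt_min => /andP[/ballX Xy _]; apply: JF_lip.
- by move=> v; apply: JF_mon.
- by move=> y; rewrite lt_min => /andP[_]; apply: F_diff_xs.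
- by rewrite lt_min x_r x_d.
- exact: ltW.
- exact: ltW.
- by have := mulr_ge0 (ltW L2_gt0) e0_ge0; nra.
- by have := mulr_ge0 (ltW C1_gt0) e0_ge0; nra.
- exact: ltW.
Qed.
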